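(* Let $2 \le m < 50$. In every Nash equilibrium of the imbalanced $(m,3)$-RPS, at least two players choose mixed strategies that assign positive probability to the object $S$.
   Context: An $(m,n)$-RPS game is a symmetric, zero-sum, win/lose game with $m$ players and $n$ pure strategies (''objects''), played without collusion; each player independently chooses an object (mixed strategies are allowed, Nash equilibria are in mixed strategies). The rules assign to every multiset $c$ of $m$ chosen objects a single winning object $\phi(c)\in c$; every player who chose $\phi(c)$ wins and every other player loses. If there are $m'$ winners, each winner receives payoff $\frac{m-m'}{m'}$ and each loser receives payoff $-1$. The imbalanced $(m,3)$-RPS has objects $R,P,S$ with the following rules: any multiset containing at least one $S$ and at least one $R$ is won by $R$; any multiset containing only $R$'s and $P$'s (with at least one of each) is won by $P$; any multiset containing only $P$'s and $S$'s (with at least one of each) is won by $S$; a multiset consisting of a single object type is won by that object. *)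

From HB Require Import structures.
From mathcomp Require Import all_boot all_order all_algebra.
From mathcomp Require Import reals.
Set Implicit Arguments. Unset Strict Implicit. Unset Printing Implicit Defensive.
Import Order.TTheory GRing.Theory Num.Theory.
Local Open Scope ring_scope.

Inductive obj := oR | oP | oS.

Definition obj2o (x : obj) : 'I_3 :=
  match x with oR => inord 0 | oP => inord 1 | oS => inord 2 end.
Definition o2obj (i : 'I_3) : obj :=
  match val i with 0%N => oR | 1%N => oP | _ => oS end.
Lemma obj2oK : cancel obj2o o2obj.
Proof. by case; rewrite /o2obj /= inordK. Qed.
HB.instance Definition _ := Finite.copy obj (can_type obj2oK).

Definition profile (m : nat) := {ffun 'I_m -> obj}.

Definition present m (c : profile m) (x : obj) : bool := [exists i, c i == x].

Definition winner m (c : profile m) : obj :=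
  let hR := present c oR in let hP := present c oP in let hS := present c oS in
  if hR && hS then oR
  else if hR && hP then oP
  else if hP && hS then oS
  else if hR then oR else if hP then oP else oS.

Definition nwinners m (c : profile m) : nat := #|[set j | c j == winner c]|.

Definition payoff (R : realType) m (i : 'I_m) (c : profile m) : R :=
  if c i == winner c then ((m%:R - (nwinners c)%:R) / (nwinners c)%:R)
  else -1.

Definition is_mixed (R : realType) (s : obj -> R) : Prop :=
  (forall x, 0 <= s x) /\ \sum_(x : obj) s x = 1.

Definition exp_payoff (R : realType) m (sigma : 'I_m -> obj -> R) (i : 'I_m) : R :=
  \sum_(c : profile m) (\prod_(j < m) sigma j (c j)) * payoff R i c.

Definition deviate (R : realType) m (sigma : 'I_m -> obj -> R) (i : 'I_m)
  (tau : obj -> R) : 'I_m -> obj -> R :=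
  fun j => if j == i then tau else sigma j.

Definition is_NE (R : realType) m (sigma : 'I_m -> obj -> R) : Prop :=
  (forall i, is_mixed (sigma i)) /\
  forall i (tau : obj -> R), is_mixed tau ->
    exp_payoff (deviate sigma i tau) i <= exp_payoff sigma i.

(* In an equilibrium each pure strategy a player uses earns exactly his value
   and no pure strategy earns more; the game is zero-sum.  Let Q be the
   probability that all players other than i choose P and t the expected number
   of them choosing R.  If no rival of i ever plays S, then S earns i exactly
   m Q - 1 (he wins alone iff all others play P), P earns him at least t/(m-1),
   and Q >= 1 - t.
   If nobody plays S, a player with nonpositive value (one exists since the values
   sum to 0) contradicts these bounds.  If only i0 plays S, his value m Q - 1 is
   positive, so he never plays R; every rival j earns at least
   m (1 - s/2) Q - 1 by switching to S and m s / (1 + t) - 1 by switching to R,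
   where s is the probability that i0 plays S.  Summing over the rivals, whose values
   add up to 1 - m Q, gives polynomial inequalities in m, s, t, Q without
   solution. *)

From mathcomp Require Import all_boot all_order all_algebra.
From mathcomp Require Import reals ring lra.
Set Implicit Arguments. Unset Strict Implicit. Unset Printing Implicit Defensive.
Import Order.TTheory GRing.Theory Num.Theory.
Local Open Scope ring_scope.

(* Equality on [obj] is transported from ['I_3] and does not reduce on
   constructors; [obj_eqE] makes it compute. *)
Definition obj_eqb (x y : obj) : bool :=
  match x, y with oR, oR | oP, oP | oS, oS => true | _, _ => false end.

Lemma obj_eqE (x y : obj) : (x == y) = obj_eqb x y.
Proof. by case: x; case: y; rewrite ?eqxx //; apply/negbTE/eqP. Qed.

Lemma obj_neqPS x : x != oP -> x != oS -> x = oR.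
Proof. by case: x => //; rewrite eqxx. Qed.

Lemma sum_obj (V : nmodType) (f : obj -> V) : \sum_x f x = f oR + f oP + f oS.
Proof.
rewrite (bigD1 oR) // (bigD1 oP) ?obj_eqE // (bigD1 oS) ?obj_eqE //.
by rewrite big1 => [|[]]; rewrite ?obj_eqE //= addr0 addrA.
Qed.

Lemma sum_mul_eq (R : pzSemiRingType) (I : finType) (g : I -> R) (z : I) :
  \sum_y g y * (y == z)%:R = g z.
Proof.
rewrite (bigD1 z) //= eqxx mulr1 big1 ?addr0 // => y /negbTE ->.
by rewrite mulr0.
Qed.

Definition pure (R : realType) (x : obj) : obj -> R := fun y => (y == x)%:R.

Section MixedStrategy.
Variables (R : realType) (s : obj -> R).
Hypothesis s_mixed : is_mixed s.

Lemma mixed_ge0 x : 0 <= s x.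
Proof. by case: s_mixed. Qed.

Lemma mixed_sum3 : s oR + s oP + s oS = 1.
Proof. by case: s_mixed => _; rewrite sum_obj. Qed.

Lemma mixed_le1 x : s x <= 1.
Proof.
have := mixed_ge0 oR; have := mixed_ge0 oP; have := mixed_ge0 oS.
by have := mixed_sum3; case: x; lra.
Qed.

End MixedStrategy.

Lemma pure_mixed (R : realType) x : is_mixed (pure R x).
Proof.
split=> [y|]; first by rewrite /pure ler0n.
by rewrite /pure sum_obj !obj_eqE; case: x => /=; ring.
Qed.

Lemma one_sub_sum_le_prod (R : realDomainType) (I : finType) (P : pred I) (q : I -> R) :
  (forall i, P i -> 0 <= q i <= 1) ->
  1 - \sum_(i | P i) q i <= \prod_(i | P i) (1 - q i).
Proof.
move=> q01; suff [] : 1 - \sum_(i | P i) q i <= \prod_(i | P i) (1 - q i) /\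
                      0 <= \sum_(i | P i) q i by [].
apply: (big_rec2 (fun a b => 1 - a <= b /\ 0 <= a)) => [|i a b Pi [le_ab a_ge0]].
  by rewrite subr0.
have /andP [qi_ge0 qi_le1] := q01 i Pi.
have : 0 <= q i * a by exact: mulr_ge0.
have : (1 - q i) * (1 - a) <= (1 - q i) * b by apply: ler_wpM2l; lra.
split; [nra | lra].
Qed.

Section Expectation.
Variables (R : realType) (m : nat) (G : 'I_m -> obj -> R).
Implicit Types (f g : profile m -> R).

Definition expect f : R := \sum_(c : profile m) (\prod_(j < m) G j (c j)) * f c.

Lemma eq_expect f g : f =1 g -> expect f = expect g.
Proof. by move=> fg; apply: eq_bigr => c _; rewrite fg. Qed.

Lemma expectD f g : expect (fun c => f c + g c) = expect f + expect g.
Proof. by rewrite /expect -big_split; apply: eq_bigr => c _; rewrite mulrDr. Qed.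

Lemma expectB f g : expect (fun c => f c - g c) = expect f - expect g.
Proof. by rewrite /expect -sumrB; apply: eq_bigr => c _; rewrite mulrBr. Qed.

Lemma expectZ a f : expect (fun c => a * f c) = a * expect f.
Proof. by rewrite /expect mulr_sumr; apply: eq_bigr => c _; rewrite mulrCA. Qed.

Lemma expect_sum (I : finType) (P : pred I) (F : I -> profile m -> R) :
  expect (fun c => \sum_(l | P l) F l c) = \sum_(l | P l) expect (F l).
Proof. by rewrite /expect exchange_big; apply: eq_bigr => c _; rewrite mulr_sumr. Qed.

Lemma expect_prod_all (A : 'I_m -> obj -> R) :
  expect (fun c => \prod_j A j (c j)) = \prod_j \sum_y G j y * A j y.
Proof.
rewrite (bigA_distr_bigA (fun j y => G j y * A j y)).
by apply: eq_bigr => c _; rewrite big_split.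
Qed.

Hypothesis G_mixed : forall j, is_mixed (G j).

Lemma expect_prod (P : pred 'I_m) (A : 'I_m -> obj -> R) :
  expect (fun c => \prod_(j | P j) A j (c j)) = \prod_(j | P j) \sum_y G j y * A j y.
Proof.
transitivity (expect (fun c => \prod_j (if P j then A j (c j) else 1))).
  by apply: eq_expect => c; rewrite big_mkcond.
rewrite (expect_prod_all (fun j y => if P j then A j y else 1)) [RHS]big_mkcond.
apply: eq_bigr => j _.
by case: (P j) => //; under eq_bigr do rewrite mulr1; case: (G_mixed j).
Qed.

Lemma expect_cst a : expect (fun=> a) = a.
Proof.
have := expect_prod pred0 (fun _ _ => 0); rewrite !big_pred0_eq => E1.
by rewrite -[RHS]mulr1 -E1 -expectZ; apply: eq_expect => c; rewrite mulr1.
Qed.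

Lemma expect_affine a b f : expect (fun c => a * f c + b) = a * expect f + b.
Proof. by rewrite expectD expectZ expect_cst. Qed.

Lemma expect_mul_prod k (L : pred 'I_m) (f : obj -> R) (g : 'I_m -> obj -> R) :
  ~~ L k ->
  expect (fun c => f (c k) * \prod_(l | L l) g l (c l)) =
  (\sum_y G k y * f y) * \prod_(l | L l) \sum_y G l y * g l y.
Proof.
move=> Lk; pose A l := if l == k then f else g l.
have splitk (F : 'I_m -> R) :
    \prod_(l | (l == k) || L l) F l = F k * \prod_(l | L l) F l.
  rewrite (bigD1 k) ?eqxx //=; congr (_ * _); apply: eq_bigl => l.
  by case: eqVneq => [->|_]; rewrite ?eqxx ?(negbTE Lk) ?andbT.
rewrite (@eq_expect _ (fun c => \prod_(l | (l == k) || L l) A l (c l))); last first.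
  move=> c; rewrite splitk /A eqxx; congr (_ * _); apply: eq_bigr => l Ll.
  by case: eqVneq Ll => // ->; rewrite (negbTE Lk).
rewrite expect_prod splitk /A eqxx; congr (_ * _); apply: eq_bigr => l Ll.
by case: eqVneq Ll => // ->; rewrite (negbTE Lk).
Qed.

Lemma expect_event k y : expect (fun c => (c k == y)%:R) = G k y.
Proof.
have := @expect_mul_prod k pred0 (fun z => (z == y)%:R) (fun _ _ => 0) isT.
rewrite !big_pred0_eq mulr1 sum_mul_eq => <-.
by apply: eq_expect => c; rewrite mulr1.
Qed.

Lemma expect_event2 k l y z : k != l ->
  expect (fun c => (c k == y)%:R * (c l == z)%:R) = G k y * G l z.
Proof.
move=> kl; have Lk : ~~ pred1 l k := kl.
have := expect_mul_prod (fun w => (w == y)%:R) (fun _ w => (w == z)%:R) Lk.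
rewrite (big_pred1 l) // !sum_mul_eq => <-.
by apply: eq_expect => c; rewrite (big_pred1 l).
Qed.

Lemma expect_le_support f g :
  (forall c : profile m, (forall j, 0 < G j (c j)) -> f c <= g c) ->
  expect f <= expect g.
Proof.
move=> le_fg; apply: ler_sum => c _.
have G_ge0 j y : 0 <= G j y by exact: mixed_ge0.
have [/forallP c_supp|] := boolP [forall j, 0 < G j (c j)].
  by rewrite ler_wpM2l ?prodr_ge0 ?le_fg.
rewrite negb_forall => /existsP [j]; rewrite lt_def G_ge0 andbT negbK => /eqP Gj0.
by rewrite (bigD1 j) //= Gj0 !mul0r.
Qed.

End Expectation.

Section Winner.
Variable m : nat.
Implicit Types (c : profile m) (j l : 'I_m).

Definition nplayers c (y : obj) : nat := #|[set j | c j == y]|.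

Lemma nplayersE (R : pzSemiRingType) c y : (nplayers c y)%:R = \sum_j (c j == y)%:R :> R.
Proof.
rewrite /nplayers -sum1_card natr_sum big_mkcond /=.
by apply: eq_bigr => j _; rewrite inE; case: (c j == y).
Qed.

Lemma nplayers_gt0 c j : (0 < nplayers c (c j))%N.
Proof. by apply/card_gt0P; exists j; rewrite inE. Qed.

Lemma nplayers_le c y : (nplayers c y <= m)%N.
Proof. by rewrite (leq_trans (max_card _)) ?card_ord. Qed.

Lemma nplayers_partition (R : pzSemiRingType) c :
  (nplayers c oR)%:R + (nplayers c oP)%:R + (nplayers c oS)%:R = m%:R :> R.
Proof.
rewrite !nplayersE -!big_split /= -[m in RHS]card_ord -sumr_const.
by apply: eq_bigr => j _; case: (c j); rewrite !obj_eqE /= ?addr0 ?add0r.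
Qed.

Lemma present_at c j x : c j = x -> present c x.
Proof. by move=> cj; apply/existsP; exists j; rewrite cj. Qed.

Lemma absent c x : (forall l, c l != x) -> ~~ present c x.
Proof. by move=> h; apply/existsP => -[l]; rewrite (negbTE (h l)). Qed.

Lemma nplayers_absent c y : ~~ present c y -> nplayers c y = 0%N.
Proof.
move=> yabs; apply/eqP; rewrite cards_eq0; apply/eqP/setP => l; rewrite !inE.
by apply/negbTE/eqP => /present_at; apply/negP.
Qed.

Lemma winner_RS c : present c oR -> present c oS -> winner c = oR.
Proof. by rewrite /winner => -> ->. Qed.

Lemma winner_P c : ~~ present c oS -> present c oP -> winner c = oP.
Proof. by rewrite /winner => /negbTE -> ->; case: (present c oR). Qed.

Lemma winner_S c : ~~ present c oR -> present c oS -> winner c = oS.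
Proof. by rewrite /winner => /negbTE -> ->; rewrite andbT; case: (present c oP). Qed.

Lemma winner_R c : present c oR -> ~~ present c oP -> ~~ present c oS -> winner c = oR.
Proof. by rewrite /winner => -> /negbTE -> /negbTE ->. Qed.

Lemma winner_present c : (0 < m)%N -> present c (winner c).
Proof.
move=> m_gt0; have := present_at (erefl (c (Ordinal m_gt0))).
rewrite /winner.
case hR: (present c oR); case hP: (present c oP); case hS: (present c oS);
  by rewrite /= ?hR ?hP ?hS //; case: (c _); rewrite ?hR ?hP ?hS.
Qed.

End Winner.

Lemma inv_ge_tangent (R : realFieldType) (x b : R) :
  0 < x -> 0 < b -> 2 / b - x / b ^+ 2 <= x^-1.
Proof.
move=> x_gt0 b_gt0; rewrite -subr_ge0.
have -> : x^-1 - (2 / b - x / b ^+ 2) = (x - b) ^+ 2 / (x * b ^+ 2).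
  by field; rewrite !gt_eqF.
by rewrite divr_ge0 ?sqr_ge0 // mulr_ge0 ?sqr_ge0 ?ltW.
Qed.

Section Payoff.
Variables (R : realType) (m : nat).
Implicit Types (c : profile m) (i j k l : 'I_m).

Lemma payoff_winner c i :
  c i = winner c -> payoff R i c = m%:R / (nplayers c (winner c))%:R - 1.
Proof.
move=> ci; rewrite /payoff ci eqxx mulrBl divff //.
by rewrite pnatr_eq0 -lt0n /nwinners -ci nplayers_gt0.
Qed.

Lemma payoff_loser c i : c i != winner c -> payoff R i c = -1.
Proof. by rewrite /payoff => /negbTE ->. Qed.

Lemma payoff_ge c i : -1 <= payoff R i c.
Proof.
rewrite /payoff; case: ifP => _ //.
have : 0 <= (m%:R - (nwinners c)%:R) / (nwinners c)%:R :> R.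
  by rewrite divr_ge0 // subr_ge0 ler_nat nplayers_le.
lra.
Qed.

Lemma payoff_sum c : (0 < m)%N -> \sum_i payoff R i c = 0.
Proof.
move=> m_gt0; have [j /eqP cj] := existsP (winner_present c m_gt0).
set w := winner c in cj *; set k := (nplayers c w)%:R : R.
have k_gt0 : 0 < k by rewrite ltr0n -cj nplayers_gt0.
rewrite (eq_bigr (fun i => (c i == w)%:R * (m%:R / k) - 1)); last first.
  move=> i _; case: eqP => [/payoff_winner|/eqP/payoff_loser] ->;
  by rewrite ?mul1r ?mul0r ?sub0r.
rewrite sumrB -mulr_suml -nplayersE sumr_const card_ord -/k.
by rewrite mulrCA divff ?gt_eqF // mulr1 subrr.
Qed.

Lemma payoff_S_alone c i : c i = oS -> (forall l, l != i -> c l != oS) ->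
  payoff R i c = m%:R * \prod_(l | l != i) (c l == oP)%:R - 1.
Proof.
move=> ci noS; have [/forallP allP | ] := boolP [forall l, (l != i) ==> (c l == oP)].
  have cP l : l != i -> c l = oP by move=> li; apply/eqP; have := allP l; rewrite li.
  rewrite big1 ?mulr1 => [|l /cP ->]; last by rewrite eqxx.
  have W : winner c = oS.
    apply: winner_S (present_at ci); apply: absent => l.
    by case: (eqVneq l i) => [->|/cP ->]; rewrite ?ci obj_eqE.
  have one : nplayers c oS = 1%N.
    rewrite -(cards1 i); apply: eq_card => l; rewrite !inE.
    by case: (eqVneq l i) => [->|li]; rewrite ?ci ?eqxx // (negbTE (noS l li)).
  by rewrite payoff_winner W ?one ?divr1 // ci.
rewrite negb_forall => /existsP [l]; rewrite negb_imply => /andP [li clP].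
have clR : c l = oR := obj_neqPS clP (noS l li).
rewrite (bigD1 l) //= clR obj_eqE mul0r mulr0 sub0r payoff_loser //.
by rewrite winner_RS ?ci ?obj_eqE ?(present_at clR) ?(present_at ci).
Qed.

Lemma payoff_P_noS c i : (1 < m)%N -> c i = oP -> (forall l, c l != oS) ->
  (nplayers c oR)%:R / (m%:R - 1) <= payoff R i c.
Proof.
move=> m_gt1 ci noS; have W := winner_P (absent noS) (present_at ci).
have := nplayers_partition R c; rewrite (nplayers_absent (absent noS)) addr0.
have := nplayers_gt0 c i; rewrite ci -(ler_nat R) -natr1E.
set kR := (nplayers c oR)%:R; set kP := (nplayers c oP)%:R => kP_ge1 part.
rewrite payoff_winner W ?ci //.
have -> : m%:R / kP - 1 = kR / kP by rewrite -part; field; rewrite gt_eqF //; lra.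
have [kR0|kR_gt0] := posnP (nplayers c oR).
  by rewrite /kR kR0 !mul0r.
have kR_ge1 : 1 <= kR by rewrite /kR ler1n.
rewrite ler_wpM2l ?ler0n // lef_pV2 ?posrE; lra.
Qed.

Lemma payoff_R_noS c i : c i = oR -> (forall l, c l != oS) -> payoff R i c <= 0.
Proof.
move=> ci noS; have [Ppres|Pabs] := boolP (present c oP).
  by rewrite payoff_loser ?(winner_P (absent noS)) ?ci ?obj_eqE //; lra.
have := nplayers_partition R c.
rewrite (nplayers_absent (absent noS)) (nplayers_absent Pabs) !addr0 => part.
have W := winner_R (present_at ci) Pabs (absent noS).
have kR_neq0 : (nplayers c oR)%:R != 0 :> R by rewrite pnatr_eq0 -lt0n -ci nplayers_gt0.
by rewrite payoff_winner W ?ci // -part divff ?subrr.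
Qed.

Lemma payoff_S_pair c k j : k != j -> c j = oS ->
  (forall l, l != k -> l != j -> c l != oS) ->
  m%:R * (((c k == oP)%:R + (c k == oS)%:R / 2) *
          \prod_(l | (l != k) && (l != j)) (c l == oP)%:R) - 1 <= payoff R j c.
Proof.
move=> kj cj noS; have := payoff_ge c j.
have [/forallP allP|] :=
  boolP [forall l, ((l != k) && (l != j)) ==> (c l == oP)]; last first.
  rewrite negb_forall => /existsP [l]; rewrite negb_imply => /andP [Ll /negbTE clP].
  by rewrite (bigD1 l) //= clP mul0r !mulr0 sub0r.
have cP l : l != k -> l != j -> c l = oP.
  by move=> lk lj; apply/eqP; have := allP l; rewrite lk lj.
rewrite big1 ?mulr1 => [|l /andP [lk lj]]; last by rewrite cP ?eqxx.
have cS l : (c l == oS) = (l == j) || (l == k) && (c k == oS).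
  case: (eqVneq l j) => [->|lj]; first by rewrite cj eqxx.
  case: (eqVneq l k) => [->|lk] //.
  by rewrite cP ?obj_eqE.
have W : c k != oR -> winner c = oS.
  move=> ckR; apply: winner_S (present_at cj); apply: absent => l.
  case: (eqVneq l k) => [->//|lk].
  by case: (eqVneq l j) => [->|lj]; rewrite ?cj ?cP ?obj_eqE.
case ck: (c k); rewrite !obj_eqE /= ?mul0r ?addr0 ?add0r ?mulr0 ?mulr1 => pay_ge.
- lra.
- have one : nplayers c oS = 1%N.
    rewrite -(cards1 j); apply: eq_card => l; rewrite !inE cS ck obj_eqE.
    by rewrite andbF orbF.
  rewrite payoff_winner W ?one ?cj ?ck ?obj_eqE //; lra.
- have two : nplayers c oS = 2%N.
    transitivity #|[set j; k]|; last by rewrite cards2 eq_sym kj.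
    by apply: eq_card => l; rewrite !inE cS ck eqxx andbT.
  rewrite payoff_winner W ?two ?cj ?ck ?obj_eqE //; lra.
Qed.

Lemma payoff_R_vs_S c j k : c j = oR -> c k = oS ->
  payoff R j c = m%:R / (nplayers c oR)%:R - 1.
Proof.
move=> cj ck; have W := winner_RS (present_at cj) (present_at ck).
by rewrite payoff_winner W ?cj.
Qed.

End Payoff.

Section Deviation.
Variables (R : realType) (m : nat) (s : 'I_m -> obj -> R).
Implicit Types (i j l : 'I_m) (x : obj).

Lemma deviate_self i tau : deviate s i tau i = tau.
Proof. by rewrite /deviate eqxx. Qed.

Lemma deviate_other i tau l : l != i -> deviate s i tau l = s l.
Proof. by rewrite /deviate => /negbTE ->. Qed.

Definition pure_payoff i x : R := exp_payoff (deviate s i (pure R x)) i.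

Lemma exp_payoff_deviate i tau :
  exp_payoff (deviate s i tau) i = \sum_x tau x * pure_payoff i x.
Proof.
have prod_dev tau' (c : profile m) :
    \prod_j deviate s i tau' j (c j) = tau' (c i) * \prod_(j | j != i) s j (c j).
  rewrite (bigD1 i) //= deviate_self; congr (_ * _).
  by apply: eq_bigr => j /deviate_other ->.
rewrite /pure_payoff /exp_payoff; under [RHS]eq_bigr do rewrite mulr_sumr.
rewrite exchange_big /=; apply: eq_bigr => c _.
transitivity
  (\sum_x tau x * (x == c i)%:R * (\prod_(j | j != i) s j (c j) * payoff R i c)).
  by rewrite -mulr_suml sum_mul_eq prod_dev mulrA.
by apply: eq_bigr => x _; rewrite prod_dev /pure eq_sym !mulrA.
Qed.

Lemma exp_payoff_mix i : exp_payoff s i = \sum_x s i x * pure_payoff i x.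
Proof.
rewrite -exp_payoff_deviate; apply: eq_bigr => c _; congr (_ * _).
by apply: eq_bigr => j _; rewrite /deviate; case: eqP => // ->.
Qed.

Lemma sum_exp_payoff : (0 < m)%N -> \sum_i exp_payoff s i = 0.
Proof.
move=> m_gt0; rewrite /exp_payoff exchange_big /=.
by apply: big1 => c _; rewrite -mulr_sumr payoff_sum // mulr0.
Qed.

Hypothesis s_mixed : forall i, is_mixed (s i).

Lemma deviate_mixed i x j : is_mixed (deviate s i (pure R x) j).
Proof. by rewrite /deviate; case: (j == i); [exact: pure_mixed | exact: s_mixed]. Qed.

Lemma support_deviate i x (c : profile m) :
  (forall j, 0 < deviate s i (pure R x) j (c j)) ->
  c i = x /\ (forall l, l != i -> 0 < s l (c l)).
Proof.
move=> c_supp; split=> [|l li]; last by have := c_supp l; rewrite deviate_other.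
by apply/eqP; have := c_supp i; rewrite deviate_self /pure; case: eqP => //; rewrite ltxx.
Qed.

Lemma pure_payoff_ge i x (f : profile m -> R) :
  (forall c : profile m, c i = x -> (forall l, l != i -> 0 < s l (c l)) ->
    f c <= payoff R i c) ->
  expect (deviate s i (pure R x)) f <= pure_payoff i x.
Proof.
move=> le_f; apply: expect_le_support => [|c /support_deviate [ci c_supp]].
  exact: deviate_mixed.
exact: le_f.
Qed.

Lemma pure_payoff_le i x (f : profile m -> R) :
  (forall c : profile m, c i = x -> (forall l, l != i -> 0 < s l (c l)) ->
    payoff R i c <= f c) ->
  pure_payoff i x <= expect (deviate s i (pure R x)) f.
Proof.
move=> le_f; apply: expect_le_support => [|c /support_deviate [ci c_supp]].
  exact: deviate_mixed.
exact: le_f.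
Qed.

Lemma pure_payoff_eq i x (f : profile m -> R) :
  (forall c : profile m, c i = x -> (forall l, l != i -> 0 < s l (c l)) ->
    payoff R i c = f c) ->
  pure_payoff i x = expect (deviate s i (pure R x)) f.
Proof.
move=> eq_f; apply/eqP; rewrite eq_le.
rewrite (@pure_payoff_le i x f) => [|c ci c_supp]; last by rewrite eq_f.
by rewrite (@pure_payoff_ge i x f) => // c ci c_supp; rewrite eq_f.
Qed.

End Deviation.

Section Nash.
Variables (R : realType) (m : nat) (s : 'I_m -> obj -> R).
Hypothesis s_NE : is_NE s.
Implicit Types (i : 'I_m) (x : obj).

Lemma pure_payoff_le_value i x : pure_payoff s i x <= exp_payoff s i.
Proof. by case: s_NE => _; apply; exact: pure_mixed. Qed.

Lemma pure_payoff_support i x : 0 < s i x -> pure_payoff s i x = exp_payoff s i.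
Proof.
move=> sx_gt0; have [s_ge0 s_sum1] := s_NE.1 i.
set v := exp_payoff s i.
have gaps0 : \sum_y s i y * (v - pure_payoff s i y) = 0.
  under eq_bigr do rewrite mulrBr.
  by rewrite sumrB -mulr_suml s_sum1 mul1r -exp_payoff_mix subrr.
have gap_ge0 y : 0 <= s i y * (v - pure_payoff s i y).
  by rewrite mulr_ge0 // subr_ge0 pure_payoff_le_value.
have /eqP := @psumr_eq0P _ _ predT _ (fun y _ => gap_ge0 y) gaps0 x isT.
by rewrite mulf_eq0 subr_eq0 gt_eqF //= eq_sym => /eqP.
Qed.

End Nash.

Definition others_all (R : realType) m (s : 'I_m -> obj -> R) (i : 'I_m) (y : obj) : R :=
  \prod_(l | l != i) s l y.

Definition others_count (R : realType) m (s : 'I_m -> obj -> R) (i : 'I_m) (y : obj) : R :=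
  \sum_(l | l != i) s l y.

Section NoRivalS.
Variables (R : realType) (m : nat) (s : 'I_m -> obj -> R) (i : 'I_m).
Hypothesis s_mixed : forall j, is_mixed (s j).
Hypothesis no_rival_S : forall l, l != i -> s l oS = 0.

Lemma not_S_of_support l x : l != i -> 0 < s l x -> x != oS.
Proof. by move=> li; apply: contraTneq => ->; rewrite no_rival_S ?ltxx. Qed.

Lemma pure_payoff_S_alone : pure_payoff s i oS = m%:R * others_all s i oP - 1.
Proof.
rewrite (@pure_payoff_eq _ _ _ s_mixed i oS
  (fun c => m%:R * \prod_(l | l != i) (c l == oP)%:R - 1)).
  have G_mixed := deviate_mixed s_mixed i oS.
  rewrite expect_affine // (expect_prod G_mixed _ (fun _ y => (y == oP)%:R)).
  congr (_ * _ - _); apply: eq_bigr => l li.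
  by rewrite sum_mul_eq deviate_other.
move=> c ci c_supp; apply: payoff_S_alone ci _ => l li.
exact: not_S_of_support li (c_supp l li).
Qed.

Lemma pure_payoff_P_ge : (1 < m)%N ->
  others_count s i oR / (m%:R - 1) <= pure_payoff s i oP.
Proof.
move=> m_gt1; pose f (c : profile m) : R := (m%:R - 1)^-1 * \sum_l (c l == oR)%:R.
apply: le_trans (@pure_payoff_ge _ _ _ s_mixed i oP f _); last first.
  move=> c ci c_supp; rewrite /f mulrC -nplayersE.
  apply: payoff_P_noS => // l.
  case: (eqVneq l i) => [->|li]; first by rewrite ci obj_eqE.
  exact: not_S_of_support li (c_supp l li).
have G_mixed := deviate_mixed s_mixed i oP.
rewrite /f expectZ expect_sum; under eq_bigr do rewrite (expect_event G_mixed).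
rewrite (bigD1 i) //= deviate_self /pure obj_eqE add0r mulrC /others_count.
by rewrite (eq_bigr (s^~ oR)) // => l li; rewrite deviate_other.
Qed.

Lemma pure_payoff_R_le : pure_payoff s i oR <= 0.
Proof.
apply: le_trans (@pure_payoff_le _ _ _ s_mixed i oR (fun=> 0) _) _.
  move=> c ci c_supp; apply: payoff_R_noS => // l.
  case: (eqVneq l i) => [->|li]; first by rewrite ci obj_eqE.
  exact: not_S_of_support li (c_supp l li).
by rewrite expect_cst //; exact: deviate_mixed.
Qed.

Lemma others_all_P_ge : 1 - others_count s i oR <= others_all s i oP.
Proof.
rewrite /others_all (eq_bigr (fun l => 1 - s l oR)) => [|l li]; last first.
  by have := mixed_sum3 (s_mixed l); rewrite no_rival_S //; lra.
apply: one_sub_sum_le_prod => l _.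
by rewrite mixed_ge0 ?mixed_le1.
Qed.

End NoRivalS.

Lemma sum_others_const (R : pzRingType) m (i0 : 'I_m) (a : R) :
  \sum_(j | j != i0) a = (m%:R - 1) * a.
Proof.
rewrite sumr_const (eq_card (B := predC1 i0)) // cardC1 card_ord.
by case: m i0 => [[]//|m' _]; rewrite succnK -natr1 addrK mulr_natl.
Qed.

Lemma NE_S_played (R : realType) m (s : 'I_m -> obj -> R) :
  (1 < m)%N -> is_NE s -> ~ (forall i, s i oS = 0).
Proof.
move=> m_gt1 s_NE noS; have s_mixed := s_NE.1.
have [i v_le0] : exists i, exp_payoff s i <= 0.
  case: (pickP (fun i => exp_payoff s i <= 0)) => [i v_le0|v_gt0]; first by exists i.
  have m_gt0 : (0 < m)%N by exact: ltnW.
  have v_ge0 i : true -> 0 <= exp_payoff s i by move=> _; rewrite ltW // ltNge v_gt0.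
  have := @psumr_eq0P _ _ predT _ v_ge0 (sum_exp_payoff s m_gt0) (Ordinal m_gt0) isT.
  by move=> v0; have := v_gt0 (Ordinal m_gt0); rewrite /= v0 lexx.
have no_rival_S l : l != i -> s l oS = 0 by move=> _; exact: noS.
have n_gt0 : 0 < m%:R - 1 :> R by rewrite subr_gt0 ltr1n.
have m_ge2 : 2 <= m%:R :> R by rewrite ler_nat.
have vP := le_trans (pure_payoff_P_ge s_mixed no_rival_S m_gt1)
                    (pure_payoff_le_value s_NE i oP).
have vS := pure_payoff_le_value s_NE i oS.
rewrite (pure_payoff_S_alone s_mixed no_rival_S) in vS.
have Q_ge := others_all_P_ge s_mixed no_rival_S.
have t_le0 : others_count s i oR <= 0.
  have inv_gt0 : 0 < (m%:R - 1 : R)^-1 by rewrite invr_gt0.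
  by rewrite -(pmulr_lle0 _ inv_gt0); apply: le_trans vP v_le0.
have : 1 <= others_all s i oP by lra.
nra.
Qed.

Lemma unique_S_bounds_absurd (R : realFieldType) (n s t Q : R) :
  1 <= n -> 0 <= t <= n -> 0 <= s <= 1 -> 1 - t <= Q -> t / n <= (n + 1) * Q - 1 ->
  n * ((n + 1) * (1 - s / 2) * Q - 1) <= 1 - (n + 1) * Q ->
  n * ((n + 1) * s / (1 + t) - 1) <= 1 - (n + 1) * Q -> False.
Proof.
move=> n_ge1 /andP[t_ge0 t_len] /andP[s_ge0 s_le1] Q_ge v_ge rivS rivR.
have n_gt0 : 0 < n by lra.
have t_le : t <= n * ((n + 1) * Q - 1) by rewrite mulrC -ler_pdivrMr.
(* Eliminate Q: [v_ge] and [rivR] give [s_le], [v_ge] and [rivS] give [s_ge],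
   [Q_ge] and [rivS] give [s_ge']; then [s_ge] and [s_le] give [t_bound], which
   fails for 1 <= t <= n and contradicts [s_ge'] and [s_le] for t < 1. *)
have s_le : s * (n + 1) <= 1 + t.
  have tn_ge0 : 0 <= t / n by exact: divr_ge0 t_ge0 (ltW n_gt0).
  have : (n + 1) * s / (1 + t) <= 1 by nra.
  by rewrite ler_pdivrMr ?mul1r ?[s * _]mulrC //; lra.
set k := n * (1 - s / 2) + 1.
have Qk_le1 : Q * k <= 1 by rewrite /k; nra.
have s_ge : 2 * t * (n + 1) <= s * n * (n + t).
  have : (n + t) * k <= n * (n + 1) by rewrite /k; nra.
  by rewrite /k; nra.
have s_ge' : n * (1 - t) * (2 - s) <= 2 * t.
  have : (1 - t) * k <= 1 by rewrite /k; nra.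
  by rewrite /k; nra.
have t_bound : 2 * (n + 1) * t <= n * (1 - t) * (n - t) by nra.
have [t_lt1|t_ge1] := ltrP t 1.
  have : n * (1 - t) * (2 * n + 1 - t) <= 2 * (n + 1) * t by nra.
  nra.
nra.
Qed.

Section UniqueS.
Variables (R : realType) (m : nat) (s : 'I_m -> obj -> R) (i0 : 'I_m).
Hypotheses (m_gt1 : (1 < m)%N) (s_NE : is_NE s) (S_i0 : 0 < s i0 oS).
Hypothesis no_rival_S : forall l, l != i0 -> s l oS = 0.

Let s_mixed := s_NE.1.
Local Notation Q := (others_all s i0 oP).
Local Notation t := (others_count s i0 oR).

Let value_ge : t / (m%:R - 1) <= exp_payoff s i0 :=
  le_trans (pure_payoff_P_ge s_mixed no_rival_S m_gt1) (pure_payoff_le_value s_NE i0 oP).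

Lemma unique_S_value : exp_payoff s i0 = m%:R * Q - 1.
Proof.
by rewrite -(pure_payoff_support s_NE S_i0) (pure_payoff_S_alone s_mixed no_rival_S).
Qed.

Lemma unique_S_value_gt0 : 0 < exp_payoff s i0.
Proof.
have Q_ge := others_all_P_ge s_mixed no_rival_S.
have n_gt0 : 0 < m%:R - 1 :> R by rewrite subr_gt0 ltr1n.
have [t_le0|t_gt0] := lerP t 0; last by apply: lt_le_trans value_ge; rewrite divr_gt0.
have m_ge2 : 2 <= m%:R :> R by rewrite ler_nat.
have : 1 <= Q by lra.
rewrite unique_S_value; nra.
Qed.

Lemma unique_S_no_R : s i0 oR = 0.
Proof.
apply/eqP; rewrite eq_le mixed_ge0 // andbT leNgt; apply/negP => R_gt0.
have := pure_payoff_R_le s_mixed no_rival_S.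
by rewrite (pure_payoff_support s_NE R_gt0) leNgt unique_S_value_gt0.
Qed.

Lemma rival_S_ge j : j != i0 ->
  m%:R * (1 - s i0 oS / 2) * Q - 1 <= pure_payoff s j oS.
Proof.
move=> ji0; have i0j : i0 != j by rewrite eq_sym.
pose L := [pred l | (l != i0) && (l != j)].
pose f (c : profile m) := (m%:R : R) *
  (((c i0 == oP)%:R + (c i0 == oS)%:R / 2) * \prod_(l | L l) (c l == oP)%:R) - 1.
apply: le_trans (@pure_payoff_ge _ _ _ s_mixed j oS f _); last first.
  move=> c cj c_supp; apply: payoff_S_pair => // l li0 lj.
  exact (not_S_of_support no_rival_S li0 (c_supp l lj)).
have G_mixed := deviate_mixed s_mixed j oS.
have Li0 : ~~ L i0 by rewrite inE eqxx.
rewrite /f expect_affine // (expect_mul_prod G_mixed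
  (fun y => (y == oP)%:R + (y == oS)%:R / 2) (fun _ y => (y == oP)%:R) Li0).
rewrite (deviate_other _ _ i0j) sum_obj !obj_eqE /=.
rewrite !(mul0r, add0r, addr0, mulr0, mulr1).
have -> : s i0 oP + s i0 oS * (1 / 2) = 1 - s i0 oS / 2.
  by have := mixed_sum3 (s_mixed i0); rewrite unique_S_no_R; lra.
rewrite (eq_bigr (s^~ oP)) => [|l /andP [_ lj]]; last by rewrite sum_mul_eq deviate_other.
have Q_le : Q <= \prod_(l | (l != i0) && (l != j)) s l oP.
  rewrite /others_all (bigD1 j) //= ler_piMl ?mixed_le1 //.
  by apply: prodr_ge0 => l _; exact: mixed_ge0.
rewrite lerD2r -mulrA ler_wpM2l // ler_wpM2l //.
by have := mixed_le1 (s_mixed i0) oS; lra.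
Qed.

Lemma rival_R_ge j : j != i0 -> m%:R * s i0 oS / (1 + t) - 1 <= pure_payoff s j oR.
Proof.
move=> ji0; have i0j : i0 != j by rewrite eq_sym.
set b := 1 + t.
have t_ge0 : 0 <= t by apply: sumr_ge0 => l _; exact: mixed_ge0.
have b_gt0 : 0 < b by rewrite /b; lra.
(* When i0 plays S, R wins and j earns m / B - 1 with B the number of R-players;
   [inv_ge_tangent] bounds this convex function of B by its tangent at b, which
   is linear in B. *)
pose f (c : profile m) := (m%:R : R) * (2 / b * (c i0 == oS)%:R -
  b^-2 * \sum_(l | l != i0) (c i0 == oS)%:R * (c l == oR)%:R) - 1.
apply: le_trans (@pure_payoff_ge _ _ _ s_mixed j oR f _); last first.
  move=> c cj _; rewrite /f; case: (eqVneq (c i0) oS) => [ci0|_] /=; last first.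
    rewrite big1 => [|l _]; last by rewrite mul0r.
    by rewrite !(mulr0, oppr0, subr0, sub0r) payoff_ge.
  rewrite (payoff_R_vs_S R cj ci0) lerD2r ler_wpM2l ?ler0n //.
  have nR_gt0 : 0 < (nplayers c oR)%:R :> R by rewrite ltr0n -cj nplayers_gt0.
  have -> : \sum_(l | l != i0) 1 * (c l == oR)%:R = (nplayers c oR)%:R :> R.
    rewrite nplayersE [RHS](bigD1 i0) //= ci0 obj_eqE add0r.
    by apply: eq_bigr => l _; rewrite mul1r.
  by rewrite mulr1 (mulrC (b^-2)); exact: inv_ge_tangent.
have G_mixed := deviate_mixed s_mixed j oR.
rewrite /f expect_affine // expectB !expectZ (expect_event G_mixed) expect_sum.
rewrite (deviate_other _ _ i0j).
rewrite (eq_bigr (fun l => s i0 oS * deviate s j (pure R oR) l oR)) => [|l li0];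
  last first.
  by rewrite (expect_event2 G_mixed) ?(deviate_other _ _ i0j) // eq_sym.
rewrite -mulr_sumr; set X := \sum_(l | l != i0) _.
have X_le : X <= b.
  rewrite /X /b /others_count (bigD1 j) //= deviate_self /pure eqxx.
  rewrite [X in _ <= 1 + X](bigD1 j) //= addrA.
  apply: lerD; first by rewrite lerDl mixed_ge0.
  by apply: ler_sum => l /andP [_ lj]; rewrite deviate_other.
rewrite lerD2r -mulrA ler_wpM2l ?ler0n //.
have : b^-2 * (s i0 oS * X) <= b^-2 * (s i0 oS * b).
  by apply: ler_wpM2l; [rewrite invr_ge0 exprn_ge0 ?ltW | rewrite ler_wpM2l ?mixed_ge0].
have -> : b^-2 * (s i0 oS * b) = s i0 oS / b by field; rewrite gt_eqF.
lra.
Qed.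

Lemma sum_rivals_value : \sum_(j | j != i0) exp_payoff s j = - exp_payoff s i0.
Proof.
have m_gt0 : (0 < m)%N by exact: ltnW.
have := sum_exp_payoff s m_gt0; rewrite (bigD1 i0) //= => /eqP.
by rewrite addrC addr_eq0 => /eqP.
Qed.

Lemma unique_S_absurd : False.
Proof.
set n : R := m%:R - 1.
have m_eq : m%:R = n + 1 by rewrite /n subrK.
have n_ge1 : 1 <= n.
  have : 2 <= m%:R :> R by rewrite ler_nat.
  by rewrite /n; lra.
have sum_ge (a : R) (F : 'I_m -> R) :
    (forall j, j != i0 -> a <= F j) -> n * a <= \sum_(j | j != i0) F j.
  by move=> le_aF; rewrite -(sum_others_const i0); apply: ler_sum.
have t_bounds : 0 <= t <= n.
  rewrite sumr_ge0 => [|l _]; last exact: mixed_ge0.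
  rewrite /n -(mulr1 (_ - 1)) -(sum_others_const i0) ler_sum // => l _.
  exact: mixed_le1.
have value := unique_S_value; rewrite m_eq in value.
have rivals_sum : 1 - (n + 1) * Q = \sum_(j | j != i0) exp_payoff s j.
  by rewrite sum_rivals_value value opprB.
apply: (@unique_S_bounds_absurd R n (s i0 oS) t Q) => //.
- by rewrite mixed_ge0 ?mixed_le1.
- exact: others_all_P_ge s_mixed no_rival_S.
- by rewrite -value.
- rewrite rivals_sum -m_eq; apply: sum_ge => j ji0.
  exact: le_trans (rival_S_ge ji0) (pure_payoff_le_value s_NE j oS).
- rewrite rivals_sum -m_eq; apply: sum_ge => j ji0.
  exact: le_trans (rival_R_ge ji0) (pure_payoff_le_value s_NE j oR).
Qed.

End UniqueS.

Unset Implicit Arguments.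

Theorem mainTheorem4 (R : realType) (m : nat) :
  (2 <= m)%N -> (m < 50)%N ->
  forall sigma : 'I_m -> obj -> R, is_NE sigma ->
    (2 <= #|[set i : 'I_m | (0 < sigma i oS)%R]|)%N.
Proof.
move=> m_gt1 _ s s_NE; rewrite leqNgt; apply/negP => few_S.
have not_S i : i \notin [set i | 0 < s i oS] -> s i oS = 0.
  rewrite inE -leNgt => S_le0; apply/le_anti; rewrite S_le0.
  exact: mixed_ge0 (s_NE.1 i) oS.
have [S_none|[i0 S_i0]] := set_0Vmem [set i | 0 < s i oS].
  by apply: (NE_S_played m_gt1 s_NE) => i; apply: not_S; rewrite S_none inE.
apply: (unique_S_absurd m_gt1 s_NE (i0 := i0)); first by rewrite inE in S_i0.
move=> l li0; apply: not_S; apply: contra li0 => S_l.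
by have /card_le1_eqP one_S := few_S; rewrite (one_S l i0).
Qed.
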